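(* Given $0<\epsilon<1/2$, there exists $C_1=C_1(\epsilon)>0$ such that for every $n$, every $0\le\eta<1/2$ and every $\mathbf{p},\mathbf{p}'\in[\epsilon,1-\epsilon]^n$ with $|p_i-p_i'|\ge\epsilon$ for all $i$, if $\bm\beta^*=(\beta_0,\dots,\beta_n)$ is the risk-minimizing linear solution of $(\mathbf{X},Y)$ for $(\mathbf{X},Y,Z)\sim\mathcal{D}^\eta_{\mathbf{p},\mathbf{p}'}$ and $\hat Y=\beta_0+\sum_{i=1}^n\beta_iX_i$, then $$\mathbb{P}_{(\mathbf{X},Y,Z)\sim\mathcal{D}^\eta_{\mathbf{p},\mathbf{p}'}}\big[\hat YZ\le0\big]\le\exp(-C_1n).$$
   Context: For $\mathbf{q}\in[0,1]^n$, $\mathcal{B}_{\mathbf{q}}$ is the law of independent $X_i\in\{-1,1\}$ with $\mathbb{P}[X_i=1]=q_i$. The toy distribution $\mathcal{D}^{\eta}_{\mathbf{p},\mathbf{p}'}$: sample $Z$ uniformly from $\{-1,1\}$; if $Z=1$ sample $\mathbf{X}\sim\mathcal{B}_{\mathbf{p}}$, else $\mathbf{X}\sim\mathcal{B}_{\mathbf{p}'}$; set $Y=Z$ with probability $1-\eta$ and $Y=-Z$ with probability $\eta$. The risk-minimizing linear solution is $\bm\beta^*=\arg\min_{\bm\beta}\mathbb{E}(\beta_0+\sum_i\beta_iX_i-Y)^2$. *)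

From mathcomp Require Import all_boot all_order all_algebra.
From mathcomp Require Import all_classical all_reals all_analysis.
Set Implicit Arguments. Unset Strict Implicit. Unset Printing Implicit Defensive.
Import Order.TTheory GRing.Theory Num.Theory.
Local Open Scope ring_scope.

(* A sign in {-1,1} is encoded by a boolean: true <-> +1, false <-> -1. *)
Definition sgnb {R : ringType} (b : bool) : R := if b then 1 else -1.

(* Outcomes (X, Y, Z) of the toy distribution, X in {-1,1}^n. *)
Definition outcome (n : nat) : finType :=
  ({ffun 'I_n -> bool} * bool * bool)%type.

(* Probability mass of the outcome (x,y,z) under D^eta_{p,p'}:
   Z uniform; X ~ B_p if Z = 1, X ~ B_p' if Z = -1 (independent coordinates,
   P[X_i = 1] = q_i); Y = Z w.p. 1-eta, Y = -Z w.p. eta. *)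
Definition toyD {R : realType} (n : nat) (eta : R) (p p' : 'I_n -> R)
    (w : outcome n) : R :=
  let: (x, y, z) := w in
  (1 / 2) *
  (\prod_(i < n) (let q := if z then p i else p' i in
                  if x i then q else 1 - q)) *
  (if y == z then 1 - eta else eta).

Definition linpred {R : realType} (n : nat) (b0 : R) (b : 'I_n -> R)
    (x : {ffun 'I_n -> bool}) : R :=
  b0 + \sum_(i < n) b i * sgnb (x i).

Definition risk {R : realType} (n : nat) (eta : R) (p p' : 'I_n -> R)
    (b0 : R) (b : 'I_n -> R) : R :=
  \sum_(w : outcome n)
     toyD eta p p' w * (linpred b0 b w.1.1 - sgnb w.1.2) ^+ 2.

Definition risk_minimizer {R : realType} (n : nat) (eta : R) (p p' : 'I_n -> R)
    (b0 : R) (b : 'I_n -> R) : Prop :=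
  forall (c0 : R) (c : 'I_n -> R), risk eta p p' b0 b <= risk eta p p' c0 c.

Definition err_prob {R : realType} (n : nat) (eta : R) (p p' : 'I_n -> R)
    (b0 : R) (b : 'I_n -> R) : R :=
  \sum_(w : outcome n | linpred b0 b w.1.1 * sgnb w.2 <= 0) toyD eta p p' w.

From mathcomp Require Import all_boot all_order all_algebra.
From mathcomp Require Import all_classical all_reals all_analysis.
From mathcomp Require Import ring lra.
Import Order.TTheory GRing.Theory Num.Theory.
Local Open Scope ring_scope.

(* Write mean_q(i) = 2 q_i - 1 for the mean of the i-th sign under B_q.  A minimizer of the quadratic risk has
      residual orthogonal to every linear predictor (first-order condition).
      Testing this against the constant predictor and the coordinates, and
      computing the first two moments of the product measure B_q, gives
        Yhat(x) = K * sum_i gap_i / varsum_i * (x_i - mid_i)   with K > 0,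
      where gap_i = mean_p(i) - mean_p'(i), varsum_i is the sum of the two
      class variances of X_i and mid_i the midpoint of the class means.
   2. Chernoff bound.  Hence Yhat Z <= 0 forces sum_i score_i <= 0, where the
      scores score_i = Z gap_i / varsum_i (X_i - mid_i) are independent given Z,
      bounded by 1/eps and of conditional mean >= eps^2.  Markov's inequality
      for exp(-t sum_i score_i) with t = eps^4/4 and a two-point bound on
      each moment generating factor give exp(-eps^6/8) per coordinate.
   3. The theorem follows with C1 = eps^6 / 8. *)

Set Implicit Arguments. Unset Strict Implicit.

Lemma quad_stationary (R : realFieldType) (L Q : R) :
  0 <= Q -> (forall s, 0 <= 2 * s * L + s ^+ 2 * Q) -> L = 0.
Proof.
move=> Q0 hs; have Q1 : Q + 1 != 0 by rewrite gt_eqF //; lra.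
have := hs (- L / (Q + 1)).
have -> : 2 * (- L / (Q + 1)) * L + (- L / (Q + 1)) ^+ 2 * Q
          = - (L ^+ 2 * (Q + 2)) / (Q + 1) ^+ 2 by field.
move=> /(mulr_ge0 (sqr_ge0 (Q + 1))); rewrite mulrC divfK ?sqrf_eq0 //.
rewrite oppr_ge0 => H; have L2 : L ^+ 2 <= 0 by have := sqr_ge0 L; nra.
by apply/eqP; rewrite -sqrf_eq0 eq_le L2 sqr_ge0.
Qed.

Section ExponentialBounds.
Variable R : realType.

Lemma expR_le_quad (u : R) : u <= 1 / 2 -> expR u <= 1 + u + 2 * u ^+ 2.
Proof.
move=> hu; have Eu := expR_gt0 u.
have inv : expR u * expR (- u) = 1 by rewrite -expRD subrr expR0.
have h1 : expR u * (1 - u) <= 1.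
  by rewrite -inv; apply: ler_wpM2l; [exact: ltW | have := expR_ge1Dx (- u); lra].
have h2 : (1 - u) * (1 + u + 2 * u ^+ 2) = 1 + u ^+ 2 * (1 - 2 * u) by ring.
have h3 : 0 <= u ^+ 2 * (1 - 2 * u) by apply: mulr_ge0; [exact: sqr_ge0 | lra].
rewrite -(@ler_pM2l _ (1 - u)); last lra.
lra.
Qed.

Lemma two_point_mgf (e q v1 v0 : R) :
  0 < e -> e < 1 / 2 -> 0 <= q <= 1 ->
  -1 <= e * v1 <= 1 -> -1 <= e * v0 <= 1 -> e ^+ 2 <= q * v1 + (1 - q) * v0 ->
  q * expR (- (e ^+ 4 / 4 * v1)) + (1 - q) * expR (- (e ^+ 4 / 4 * v0))
  <= expR (- (e ^+ 6 / 8)).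
Proof.
move=> e0 e1 /andP [q0 q1] hv1 hv0 hm.
set c := e ^+ 3 / 4.
have c0 : 0 < c by rewrite divr_gt0 ?exprn_gt0.
have c1 : c <= 1 / 4.
  suff : e ^+ 3 <= 1 by rewrite /c; lra.
  by rewrite exprn_ile1 // ltW //; lra.
have quad v : -1 <= e * v <= 1 ->
    expR (- (e ^+ 4 / 4 * v)) <= 1 - e ^+ 4 / 4 * v + 2 * c ^+ 2.
  move=> /andP [ev_lo ev_hi].
  have -> : e ^+ 4 / 4 * v = c * (e * v) by rewrite /c; ring.
  have cv : (c * (e * v)) ^+ 2 <= c ^+ 2.
    have ev2 : (e * v) ^+ 2 <= 1 by nra.
    by rewrite exprMn ler_piMr ?sqr_ge0.
  apply: le_trans (expR_le_quad _) _; nra.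
have := quad v1 hv1; have := quad v0 hv0.
have := expR_ge1Dx (- (e ^+ 6 / 8)).
have -> : 2 * c ^+ 2 = e ^+ 6 / 8 by rewrite /c; field.
have : e ^+ 6 / 4 <= e ^+ 4 / 4 * (q * v1 + (1 - q) * v0).
  by have := exprn_ge0 4 (ltW e0); nra.
nra.
Qed.

End ExponentialBounds.

Section ProductBernoulli.
Variables (R : realType) (n : nat).
Implicit Types (q : 'I_n -> R) (x : {ffun 'I_n -> bool}).

Definition bern q x : R := \prod_(i < n) (if x i then q i else 1 - q i).

Definition mean q i : R := 2 * q i - 1.

Lemma bern_ge0 q x : (forall i, 0 <= q i <= 1) -> 0 <= bern q x.
Proof.
move=> hq; apply: prodr_ge0 => i _.
by have /andP [q0 q1] := hq i; case: (x i); lra.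
Qed.

Lemma sum_bern_prod q (f : 'I_n -> bool -> R) :
  \sum_x bern q x * \prod_(i < n) f i (x i)
  = \prod_(i < n) (q i * f i true + (1 - q i) * f i false).
Proof.
under eq_bigr do rewrite -big_split /=.
rewrite -(bigA_distr_bigA (fun i (b : bool) => (if b then q i else 1 - q i) * f i b)).
by apply: eq_bigr => i _; rewrite big_bool.
Qed.

Lemma sum_bern1 q : \sum_x bern q x = 1.
Proof.
have := sum_bern_prod q (fun _ _ => 1) => /=.
under eq_bigr do rewrite big1_eq mulr1.
by move=> ->; rewrite big1 // => i _; ring.
Qed.

Lemma sum_bern_coord q j (g : bool -> R) :
  \sum_x bern q x * g (x j) = q j * g true + (1 - q j) * g false.
Proof.
pose f i (b : bool) := if i == j then g b else 1.
transitivity (\sum_x bern q x * \prod_(i < n) f i (x i)).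
  by apply: eq_bigr => x _; rewrite /f -big_mkcond big_pred1_eq.
rewrite sum_bern_prod (bigD1 j) //= /f eqxx big1 ?mulr1 // => i /negbTE ->; ring.
Qed.

Lemma sum_bern_coord2 q i j (g h : bool -> R) : i != j ->
  \sum_x bern q x * (g (x i) * h (x j))
  = (q i * g true + (1 - q i) * g false) * (q j * h true + (1 - q j) * h false).
Proof.
move=> ij.
pose f k (b : bool) := (if k == i then g b else 1) * (if k == j then h b else 1).
transitivity (\sum_x bern q x * \prod_(k < n) f k (x k)).
  by apply: eq_bigr => x _; rewrite /f big_split -!big_mkcond !big_pred1_eq.
have ji : j != i by rewrite eq_sym.
rewrite sum_bern_prod (bigD1 i) // (bigD1 j) //= /f !eqxx (negbTE ij) (negbTE ji).
rewrite big1 ?mulr1; first by ring.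
by move=> k /andP [/negbTE -> /negbTE ->]; ring.
Qed.

Lemma sum_bern_sgn q j : \sum_x bern q x * sgnb (x j) = mean q j.
Proof. by rewrite (sum_bern_coord q j (@sgnb R)) /mean /sgnb; ring. Qed.

Lemma sum_bern_sgn2 q i j :
  \sum_x bern q x * (sgnb (x i) * sgnb (x j))
  = if i == j then 1 else mean q i * mean q j.
Proof.
case: eqP => [<-|/eqP ij]; last by rewrite sum_bern_coord2 // /mean /sgnb; ring.
rewrite -(sum_bern1 q); apply: eq_bigr => x _; rewrite /sgnb; case: (x i); ring.
Qed.

Lemma sum_bern_linpred q b0 b :
  \sum_x bern q x * linpred b0 b x = b0 + \sum_i b i * mean q i.
Proof.
under eq_bigr do rewrite /linpred mulrDr mulr_sumr.
rewrite big_split /= -mulr_suml sum_bern1 mul1r exchange_big /=; congr (_ + _).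
apply: eq_bigr => i _; rewrite -sum_bern_sgn mulr_sumr; apply: eq_bigr => x _; ring.
Qed.

Lemma sum_bern_sgn_linpred q b0 b j :
  \sum_x bern q x * (sgnb (x j) * linpred b0 b x)
  = b0 * mean q j + b j * (1 - mean q j ^+ 2) + mean q j * \sum_i b i * mean q i.
Proof.
transitivity (b0 * \sum_x bern q x * sgnb (x j)
    + \sum_i b i * \sum_x bern q x * (sgnb (x i) * sgnb (x j))).
  rewrite mulr_sumr; under [X in _ = _ + X]eq_bigr do rewrite mulr_sumr.
  rewrite exchange_big /= -big_split; apply: eq_bigr => x _.
  rewrite /linpred !mulrDr !mulr_sumr; congr (_ + _); first ring.
  by apply: eq_bigr => i _; ring.
rewrite sum_bern_sgn -addrA; congr (_ + _).
under eq_bigr do rewrite sum_bern_sgn2.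
rewrite (eq_bigr (fun i => mean q j * (b i * mean q i)
    + (if i == j then b j * (1 - mean q j ^+ 2) else 0))); last first.
  by move=> i _; case: eqP => [->|_]; ring.
by rewrite big_split /= -mulr_sumr -big_mkcond big_pred1_eq addrC.
Qed.

Lemma bern_chernoff q (Y : 'I_n -> bool -> R) (c : R) :
  (forall i, 0 <= q i <= 1) ->
  (forall i, q i * expR (- Y i true) + (1 - q i) * expR (- Y i false) <= expR (- c)) ->
  \sum_x bern q x * expR (- \sum_i Y i (x i)) <= expR (- (c * n%:R)).
Proof.
move=> hq hY.
under eq_bigr do rewrite -sumrN expR_sum.
rewrite (sum_bern_prod q (fun i b => expR (- Y i b))).
apply: (@le_trans _ _ (\prod_(i < n) expR (- c))).
  apply: ler_prod => i _; rewrite hY andbT.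
  have /andP [q0 q1] := hq i.
  by apply: addr_ge0; apply: mulr_ge0; rewrite ?expR_ge0 //; lra.
by rewrite prodr_const card_ord -expRM_natr mulNr.
Qed.

End ProductBernoulli.

Section LinearPredictors.
Variables (R : realType) (n : nat).
Implicit Types (x : {ffun 'I_n -> bool}).

Lemma linpred_comb (b0 c0 s : R) (b c : 'I_n -> R) x :
  linpred (b0 + s * c0) (fun i => b i + s * c i) x = linpred b0 b x + s * linpred c0 c x.
Proof.
rewrite /linpred mulrDr mulr_sumr.
under eq_bigr do rewrite mulrDl -mulrA.
by rewrite big_split /=; ring.
Qed.

Lemma linpred_const x : linpred 1 (fun _ => 0) x = 1 :> R.
Proof. by rewrite /linpred big1 ?addr0 // => i _; rewrite mul0r. Qed.

Lemma linpred_coord j x : linpred 0 (fun i => (i == j)%:R) x = sgnb (x j) :> R.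
Proof.
rewrite /linpred add0r (bigD1 j) //= eqxx mul1r big1 ?addr0 // => i /negbTE ->.
by rewrite mul0r.
Qed.

End LinearPredictors.

Section ToyDistribution.
Variables (R : realType) (n : nat) (eta : R) (p p' : 'I_n -> R).
Implicit Types (x : {ffun 'I_n -> bool}) (w : outcome n).

Lemma toyDE x y z : toyD eta p p' (x, y, z)
  = 1 / 2 * bern (if z then p else p') x * (if y == z then 1 - eta else eta).
Proof. by case: z. Qed.

Lemma sum_toyD (G : outcome n -> R) :
  \sum_w toyD eta p p' w * G w =
  1 / 2 * \sum_x bern p x * ((1 - eta) * G (x, true, true) + eta * G (x, false, true))
  + 1 / 2 * \sum_x bern p' x * (eta * G (x, true, false) + (1 - eta) * G (x, false, false)).
Proof.
pose F xy z := toyD eta p p' (xy, z) * G (xy, z).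
rewrite (eq_bigr (fun w => F w.1 w.2)) => [|[] //].
rewrite -(pair_bigA _ F) /=.
pose H x y := \sum_z F (x, y) z.
rewrite (eq_bigr (fun xy => H xy.1 xy.2)) => [|[] //].
rewrite -(pair_bigA _ H) /= /H /F.
rewrite !mulr_sumr -big_split; apply: eq_bigr => x _.
by rewrite !big_bool !toyDE /=; ring.
Qed.

(* Correlation of a residual f(X) - Y with h(X): conditionally on Z, the label
   Y has mean +-(1 - 2 eta). *)
Lemma sum_toyD_residual (f h : {ffun 'I_n -> bool} -> R) :
  \sum_w toyD eta p p' w * ((f w.1.1 - sgnb w.1.2) * h w.1.1)
  = 1 / 2 * \sum_x bern p x * (h x * f x) - 1 / 2 * (1 - 2 * eta) * \sum_x bern p x * h x
  + 1 / 2 * \sum_x bern p' x * (h x * f x) + 1 / 2 * (1 - 2 * eta) * \sum_x bern p' x * h x.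
Proof.
rewrite sum_toyD !mulr_sumr -sumrB -!big_split /=; apply: eq_bigr => x _.
by rewrite /sgnb; ring.
Qed.

Hypotheses (eta01 : 0 <= eta <= 1)
  (p01 : forall i, 0 <= p i <= 1) (p'01 : forall i, 0 <= p' i <= 1).

Lemma toyD_ge0 w : 0 <= toyD eta p p' w.
Proof.
have /andP [eta0 eta1] := eta01.
case: w => [[x y] z]; rewrite toyDE; apply: mulr_ge0; last by case: (y == z); lra.
by apply: mulr_ge0; [lra | apply: bern_ge0; case: z].
Qed.

Lemma minimizer_orthogonal b0 b c0 c : risk_minimizer eta p p' b0 b ->
  \sum_w toyD eta p p' w * ((linpred b0 b w.1.1 - sgnb w.1.2) * linpred c0 c w.1.1) = 0.
Proof.
move=> hmin; apply: (@quad_stationary _ _ (\sum_w toyD eta p p' w * linpred c0 c w.1.1 ^+ 2)).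
  by apply: sumr_ge0 => w _; rewrite mulr_ge0 ?sqr_ge0 ?toyD_ge0.
move=> s; have := hmin (b0 + s * c0) (fun i => b i + s * c i).
suff -> : risk eta p p' (b0 + s * c0) (fun i => b i + s * c i) = risk eta p p' b0 b
    + (2 * s * \sum_w toyD eta p p' w * ((linpred b0 b w.1.1 - sgnb w.1.2) * linpred c0 c w.1.1)
       + s ^+ 2 * \sum_w toyD eta p p' w * linpred c0 c w.1.1 ^+ 2) by rewrite lerDl.
rewrite /risk !mulr_sumr -!big_split /=; apply: eq_bigr => w _.
by rewrite linpred_comb; ring.
Qed.

Definition gap i : R := mean p i - mean p' i.
Definition varsum i : R := (1 - mean p i ^+ 2) + (1 - mean p' i ^+ 2).
Definition mid i : R := (mean p i + mean p' i) / 2.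

(* The normal equations, obtained by testing orthogonality against the constant
   predictor and each coordinate X_j. *)
Lemma minimizer_normal_eqs b0 b : risk_minimizer eta p p' b0 b ->
  b0 = - (\sum_i b i * mean p i + \sum_i b i * mean p' i) / 2 /\
  forall j, b j * varsum j
    = gap j * ((1 - 2 * eta) - (\sum_i b i * mean p i - \sum_i b i * mean p' i) / 2).
Proof.
move=> hmin; have orth c0 c := minimizer_orthogonal c0 c hmin.
have Mc q : \sum_x bern q x * linpred 1 (fun _ => 0) x = 1.
  by rewrite -[RHS](sum_bern1 q); apply: eq_bigr => x _; rewrite linpred_const mulr1.
have McL q : \sum_x bern q x * (linpred 1 (fun _ => 0) x * linpred b0 b x)
    = b0 + \sum_i b i * mean q i.
  by rewrite -sum_bern_linpred; apply: eq_bigr => x _; rewrite linpred_const mul1r.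
have Ms q j : \sum_x bern q x * linpred 0 (fun i => (i == j)%:R) x = mean q j.
  by rewrite -sum_bern_sgn; apply: eq_bigr => x _; rewrite linpred_coord.
have MsL q j : \sum_x bern q x * (linpred 0 (fun i => (i == j)%:R) x * linpred b0 b x)
    = b0 * mean q j + b j * (1 - mean q j ^+ 2) + mean q j * \sum_i b i * mean q i.
  by rewrite -sum_bern_sgn_linpred; apply: eq_bigr => x _; rewrite linpred_coord.
have b0E : b0 = - (\sum_i b i * mean p i + \sum_i b i * mean p' i) / 2.
  by have := orth 1 (fun _ => 0); rewrite sum_toyD_residual !McL !Mc; lra.
split=> // j; have := orth 0 (fun i => (i == j)%:R).
by rewrite sum_toyD_residual !MsL !Ms b0E /varsum /gap; lra.
Qed.

Lemma minimizer_predictor b0 b : eta < 1 / 2 -> (forall i, 0 < varsum i) ->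
  risk_minimizer eta p p' b0 b ->
  exists2 K, 0 < K & forall x,
    linpred b0 b x = K * \sum_i gap i / varsum i * (sgnb (x i) - mid i).
Proof.
move=> eta_lt hvar hmin; have [b0E bE] := minimizer_normal_eqs hmin.
set Sp := \sum_i b i * mean p i in b0E bE.
set Sp' := \sum_i b i * mean p' i in b0E bE.
set K := 1 - 2 * eta - (Sp - Sp') / 2 in bE.
have bK j : b j = gap j / varsum j * K by rewrite mulrAC -bE mulfK // gt_eqF.
set T := \sum_i gap i ^+ 2 / varsum i.
have T0 : 0 <= T by apply: sumr_ge0 => i _; rewrite divr_ge0 ?sqr_ge0 ?ltW.
have SpE : Sp - Sp' = K * T.
  rewrite /Sp /Sp' -sumrB mulr_sumr; apply: eq_bigr => i _.
  by rewrite bK /gap; ring.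
have KT : K = 1 - 2 * eta - K * T / 2 by rewrite {1}/K SpE.
exists K => [|x]; first by nra.
have Smid : \sum_i b i * mid i = (Sp + Sp') / 2.
  by rewrite /Sp /Sp' -big_split mulr_suml /=; apply: eq_bigr => i _; rewrite /mid; ring.
rewrite /linpred b0E mulr_sumr.
under [RHS]eq_bigr do rewrite mulrA (mulrC K) -bK mulrBr.
by rewrite sumrB Smid; ring.
Qed.

End ToyDistribution.

Section TailBound.
Variables (R : realType) (eps : R) (n : nat) (p p' : 'I_n -> R).
Hypotheses (eps_gt0 : 0 < eps) (eps_lt : eps < 1 / 2)
  (hp : forall i, eps <= p i <= 1 - eps) (hp' : forall i, eps <= p' i <= 1 - eps).

(* The contribution of coordinate i to Yhat Z, up to the positive factor K. *)
Definition score (z : bool) i (b : bool) : R :=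
  sgnb z * (gap p p' i / varsum p p' i) * (sgnb b - mid p p' i).

Lemma varsum_ge i : 4 * eps <= varsum p p' i.
Proof.
have e0 := eps_gt0; have e1 := eps_lt.
have /andP [p_lo p_hi] := hp i; have /andP [p'_lo p'_hi] := hp' i.
have h1 : 0 <= (p i - eps) * (1 - eps - p i) by apply: mulr_ge0; lra.
have h2 : 0 <= (p' i - eps) * (1 - eps - p' i) by apply: mulr_ge0; lra.
have h3 : 0 <= eps * (1 - 2 * eps) by apply: mulr_ge0; lra.
by rewrite /varsum /mean; nra.
Qed.

Lemma score_bounded z i b : -1 <= eps * score z i b <= 1.
Proof.
have e0 := eps_gt0; have e1 := eps_lt.
have /andP [p_lo p_hi] := hp i; have /andP [p'_lo p'_hi] := hp' i.
have v4 := varsum_ge i; have v0 : 0 < varsum p p' i by lra.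
have g2 : 0 <= eps * (2 - gap p p' i) by apply: mulr_ge0; rewrite /gap /mean; lra.
have g2' : 0 <= eps * (2 + gap p p' i) by apply: mulr_ge0; rewrite /gap /mean; lra.
set u := eps * (gap p p' i / varsum p p' i).
have u_lo : -1 / 2 <= u by rewrite /u mulrA ler_pdivlMr //; lra.
have u_hi : u <= 1 / 2 by rewrite /u mulrA ler_pdivrMr //; lra.
have -> : eps * score z i b = sgnb z * u * (sgnb b - mid p p' i) by rewrite /score /u; ring.
have m_lo : -1 <= mid p p' i by rewrite /mid /mean; lra.
have m_hi : mid p p' i <= 1 by rewrite /mid /mean; lra.
by rewrite /sgnb; case: z; case: b; apply/andP; split; nra.
Qed.

(* Conditionally on Z, the mean score is gap^2 / (2 varsum) >= eps^2. *)
Lemma score_mean z i : eps <= `|p i - p' i| ->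
  eps ^+ 2 <= (if z then p else p') i * score z i true
              + (1 - (if z then p else p') i) * score z i false.
Proof.
move=> hgap; have e0 := eps_gt0; have e1 := eps_lt.
have /andP [p_lo p_hi] := hp i; have /andP [p'_lo p'_hi] := hp' i.
have v4 := varsum_ge i; have v0 : 0 < varsum p p' i by lra.
have -> : (if z then p else p') i * score z i true
          + (1 - (if z then p else p') i) * score z i false
          = gap p p' i ^+ 2 / (2 * varsum p p' i).
  by rewrite /score /sgnb /mid /gap /mean; case: z; field; rewrite gt_eqF.
have gap2 : 4 * eps ^+ 2 <= gap p p' i ^+ 2.
  by move: hgap; rewrite /gap /mean ler_normr => /orP [] h; nra.
have v2 : varsum p p' i <= 2 by rewrite /varsum; nra.
by rewrite ler_pdivlMr; nra.
Qed.

Lemma coordinate_mgf z i : eps <= `|p i - p' i| ->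
  (if z then p else p') i * expR (- (eps ^+ 4 / 4 * score z i true))
  + (1 - (if z then p else p') i) * expR (- (eps ^+ 4 / 4 * score z i false))
  <= expR (- (eps ^+ 6 / 8)).
Proof.
move=> hgap; apply: two_point_mgf; rewrite ?score_bounded ?score_mean //.
have e0 := eps_gt0; have /andP [p_lo p_hi] := hp i; have /andP [p'_lo p'_hi] := hp' i.
by case: z; apply/andP; split; lra.
Qed.

(* Markov's inequality for exp(-t sum_i score_i) followed by the Chernoff bound
   in each class. *)
Lemma err_prob_bound eta b0 b : 0 <= eta -> eta < 1 / 2 ->
  (forall i, eps <= `|p i - p' i|) -> risk_minimizer eta p p' b0 b ->
  err_prob eta p p' b0 b <= expR (- (eps ^+ 6 / 8 * n%:R)).
Proof.
move=> eta0 eta_lt hgap hmin; have e0 := eps_gt0; have e1 := eps_lt.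
have eta01 : 0 <= eta <= 1 by apply/andP; split; lra.
have prob (q : 'I_n -> R) : (forall i, eps <= q i <= 1 - eps) -> forall i, 0 <= q i <= 1.
  by move=> hq i; have /andP [lo hi] := hq i; apply/andP; split; lra.
have p01 := prob p hp; have p'01 := prob p' hp'.
have hvar i : 0 < varsum p p' i by have := varsum_ge i; lra.
have [K K0 hK] := minimizer_predictor eta01 p01 p'01 eta_lt hvar hmin.
set t := eps ^+ 4 / 4.
have t0 : 0 <= t by rewrite divr_ge0 ?exprn_ge0 ?ltW.
pose G (w : outcome n) := expR (- \sum_i t * score w.2 i (w.1.1 i)).
have markov : err_prob eta p p' b0 b <= \sum_w toyD eta p p' w * G w.
  rewrite /err_prob big_mkcond /=; apply: ler_sum => w _.
  have D0 := toyD_ge0 eta01 p01 p'01 w.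
  case: ifP => [hneg|_]; last by rewrite mulr_ge0 ?expR_ge0.
  rewrite -[leLHS]mulr1 ler_wpM2l // /G -mulr_sumr.
  have S0 : \sum_i score w.2 i (w.1.1 i) <= 0.
    move: hneg; rewrite hK -mulrA pmulr_rle0 // mulr_suml.
    by under eq_bigr do rewrite mulrC mulrA; exact: id.
  have := expR_ge1Dx (- (t * \sum_i score w.2 i (w.1.1 i))); nra.
apply: (le_trans markov); rewrite sum_toyD /G /=.
have mix (a E : R) : (1 - a) * E + a * E = E by ring.
have mix' (a E : R) : a * E + (1 - a) * E = E by ring.
under eq_bigr do rewrite mix.
under [X in _ + _ * X]eq_bigr do rewrite mix'.
have chernoff z : \sum_x bern (if z then p else p') x * expR (- \sum_i t * score z i (x i))
    <= expR (- (eps ^+ 6 / 8 * n%:R)).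
  apply: (bern_chernoff (Y := fun i b => t * score z i b)) => i.
    by case: z; [exact: p01 | exact: p'01].
  exact (coordinate_mgf z (hgap i)).
have /= := chernoff true; have /= := chernoff false.
lra.
Qed.

End TailBound.

Unset Implicit Arguments.

Theorem mainTheorem8 (R : realType) (eps : R) :
  0 < eps -> eps < 1 / 2 ->
  exists C1 : R, 0 < C1 /\
    forall (n : nat) (eta : R) (p p' : 'I_n -> R),
      0 <= eta -> eta < 1 / 2 ->
      (forall i, eps <= p i <= 1 - eps) ->
      (forall i, eps <= p' i <= 1 - eps) ->
      (forall i, eps <= `|p i - p' i|) ->
      forall (b0 : R) (b : 'I_n -> R),
        risk_minimizer eta p p' b0 b ->
        err_prob eta p p' b0 b <= expR (- (C1 * n%:R)).
Proof.
move=> eps_gt0 eps_lt; exists (eps ^+ 6 / 8).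
split; first by rewrite divr_gt0 ?exprn_gt0.
move=> n eta p p' eta_ge0 eta_lt hp hp' hgap b0 b hmin.
exact: err_prob_bound.
Qed.
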